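(* Let $X$ be any space and let $A$ be a homotopy cut-set for paths $\alpha,\beta:[0,1]\to X$ such that $\alpha(A)\subseteq X\setminus\mathbf{aw}(X)$. Then $\alpha\simeq\beta$.
   Context: $\simeq$ is path-homotopy. A loop is trivial if path-homotopic to a constant loop. A sequence of loops $\alpha_n$ based at $x$ is a null-sequence if every neighborhood of $x$ contains $\alpha_n([0,1])$ for all but finitely many $n$. $\mathbf{aw}(X)=\{x\in X\mid \text{there is a null-sequence of non-trivial loops based at }x\}$. For paths $\alpha,\beta:[s,t]\to X$, a set $A\subseteq[s,t]$ is a homotopy cut-set for $\alpha,\beta$ if $A$ is closed, nowhere dense, contains $\{s,t\}$, $\alpha|_A=\beta|_A$, and $\alpha|_{[a,b]}\simeq\beta|_{[a,b]}$ for every component $(a,b)$ of $[s,t]\setminus A$. *)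

From Stdlib Require Import Reals.
Open Scope R_scope.

Record TopSpace := {
  pt :> Type;
  isOpen : (pt -> Prop) -> Prop;
  open_full : isOpen (fun _ => True);
  open_inter : forall U V, isOpen U -> isOpen V -> isOpen (fun x => U x /\ V x);
  open_union : forall F : (pt -> Prop) -> Prop,
      (forall U, F U -> isOpen U) -> isOpen (fun x => exists U, F U /\ U x)
}.

Definition interval (s t : R) (u : R) : Prop := s <= u <= t.

Definition cont_on {X : TopSpace} (D : R -> Prop) (f : R -> X) : Prop :=
  forall x, D x -> forall U, isOpen X U -> U (f x) ->
    exists d, 0 < d /\ forall y, D y -> Rabs (y - x) < d -> U (f y).

Definition cont_on2 {X : TopSpace} (D : R -> R -> Prop) (H : R -> R -> X) : Prop :=
  forall r u, D r u -> forall U, isOpen X U -> U (H r u) ->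
    exists d, 0 < d /\ forall r' u', D r' u' -> Rabs (r' - r) < d ->
      Rabs (u' - u) < d -> U (H r' u').

Definition is_path {X : TopSpace} (s t : R) (a : R -> X) : Prop :=
  cont_on (interval s t) a.

Definition path_homotopic {X : TopSpace} (s t : R) (a b : R -> X) : Prop :=
  exists H : R -> R -> X,
    cont_on2 (fun r u => interval 0 1 r /\ interval s t u) H /\
    (forall u, interval s t u -> H 0 u = a u) /\
    (forall u, interval s t u -> H 1 u = b u) /\
    (forall r, interval 0 1 r -> H r s = a s /\ H r t = a t).

Definition is_loop {X : TopSpace} (x : X) (g : R -> X) : Prop :=
  is_path 0 1 g /\ g 0 = x /\ g 1 = x.

Definition trivial_loop {X : TopSpace} (x : X) (g : R -> X) : Prop :=
  path_homotopic 0 1 g (fun _ => x).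

Definition null_sequence {X : TopSpace} (x : X) (g : nat -> R -> X) : Prop :=
  (forall n, is_loop x (g n)) /\
  forall U, isOpen X U -> U x ->
    exists N, forall n, (N <= n)%nat -> forall u, interval 0 1 u -> U (g n u).

Definition aw (X : TopSpace) (x : X) : Prop :=
  exists g : nat -> R -> X, null_sequence x g /\ forall n, ~ trivial_loop x (g n).

Definition closedR (A : R -> Prop) : Prop :=
  forall x, ~ A x -> exists d, 0 < d /\ forall y, Rabs (y - x) < d -> ~ A y.

(* closed A is nowhere dense iff it contains no nonempty open interval *)
Definition nowhere_denseR (A : R -> Prop) : Prop :=
  forall a b, a < b -> ~ (forall u, a < u < b -> A u).

(* (a,b) is a component of [s,t] \ A (for closed A containing s,t) *)
Definition gap (s t : R) (A : R -> Prop) (a b : R) : Prop :=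
  s <= a /\ a < b /\ b <= t /\ A a /\ A b /\ forall u, a < u < b -> ~ A u.

Definition homotopy_cut_set {X : TopSpace} (s t : R) (a b : R -> X)
    (A : R -> Prop) : Prop :=
  (forall u, A u -> interval s t u) /\
  closedR A /\ nowhere_denseR A /\ A s /\ A t /\
  (forall u, A u -> a u = b u) /\
  (forall c d, gap s t A c d -> path_homotopic c d a b).

(* Near a point t of A with a(t) not in aw(X), a and b are homotopic on every
   short interval between t and a point q of A: otherwise, for bad points
   q_n -> t, the loops "a on [t, q_n] followed by b back from q_n to t" form
   a null-sequence of non-trivial loops at a(t), since a null-homotopy of such
   a loop yields a homotopy a ~ b on [t, q_n].  The homotopy a ~ b on [0, t]
   then propagates along the closed set A: the supremum of the points of A it
   reaches is again such a point, and it can be pushed past it, either by the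
   local statement or across a complementary gap of A. *)
From Stdlib Require Import Reals Lra Classical ClassicalEpsilon.
Open Scope R_scope.

Lemma cont_on2_comp_lipschitz {X : TopSpace} (D D' : R -> R -> Prop)
  (H : R -> R -> X) (f g : R -> R -> R) (L : R) :
  0 <= L -> cont_on2 D' H ->
  (forall r u, D r u -> D' (f r u) (g r u)) ->
  (forall r u r' u', D r u -> D r' u' ->
     Rabs (f r' u' - f r u) <= L * (Rabs (r' - r) + Rabs (u' - u))) ->
  (forall r u r' u', D r u -> D r' u' ->
     Rabs (g r' u' - g r u) <= L * (Rabs (r' - r) + Rabs (u' - u))) ->
  cont_on2 D (fun r u => H (f r u) (g r u)).
Proof.
  intros HL HH Hmap Hf Hg r u Dru U HU HUx.
  destruct (HH _ _ (Hmap _ _ Dru) U HU HUx) as [d [Hd Hd']].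
  set (e := d / (2 * L + 1)).
  assert (He : 0 < e) by (unfold e; apply Rdiv_lt_0_compat; lra).
  assert (Hde : d = e * (2 * L + 1)) by (unfold e; field; lra).
  exists e; split; [exact He|].
  intros r' u' Dr' Hr Hu.
  assert (Hsum : L * (Rabs (r' - r) + Rabs (u' - u)) < d).
  { assert (L * (Rabs (r' - r) + Rabs (u' - u)) <= L * (2 * e))
      by (apply Rmult_le_compat_l; lra).
    nra. }
  apply Hd'.
  - apply Hmap; assumption.
  - specialize (Hf _ _ _ _ Dru Dr'); lra.
  - specialize (Hg _ _ _ _ Dru Dr'); lra.
Qed.

Lemma cont_on2_comp_snd {X : TopSpace} (D D' : R -> R -> Prop)
  (H : R -> R -> X) (g : R -> R) (L : R) :
  0 <= L -> cont_on2 D' H ->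
  (forall r u, D r u -> D' r (g u)) ->
  (forall u u', Rabs (g u' - g u) <= L * Rabs (u' - u)) ->
  cont_on2 D (fun r u => H r (g u)).
Proof.
  intros HL HH Hmap Hg.
  apply (cont_on2_comp_lipschitz D D' H (fun r _ => r) (fun _ u => g u) (L + 1));
    [lra | exact HH | exact Hmap | |];
    intros r u r' u' _ _; pose proof (Rabs_pos (r' - r));
    pose proof (Rabs_pos (u' - u)); [nra|].
  specialize (Hg u u'); nra.
Qed.

Lemma cont_on2_paste {X : TopSpace} (s m t : R) (H1 H2 : R -> R -> X) :
  s <= m <= t ->
  cont_on2 (fun r u => interval 0 1 r /\ interval s m u) H1 ->
  cont_on2 (fun r u => interval 0 1 r /\ interval m t u) H2 ->
  (forall r, interval 0 1 r -> H1 r m = H2 r m) ->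
  cont_on2 (fun r u => interval 0 1 r /\ interval s t u)
    (fun r u => if Rle_dec u m then H1 r u else H2 r u).
Proof.
  intros Hm C1 C2 E r u [Hr Hu] U HU HUx; unfold interval in *.
  destruct (Rle_dec u m) as [Hum|Hum].
  - destruct (Req_dec u m) as [->|Hne].
    + destruct (C1 r m (conj Hr (conj (proj1 Hm) (Rle_refl m))) U HU HUx)
        as [d1 [Hd1 Hd1']].
      rewrite E in HUx by assumption.
      destruct (C2 r m (conj Hr (conj (Rle_refl m) (proj2 Hm))) U HU HUx)
        as [d2 [Hd2 Hd2']].
      exists (Rmin d1 d2); split; [apply Rmin_pos; assumption|].
      intros r' u' [Hr' Hu'] Hrr Huu.
      pose proof (Rmin_l d1 d2); pose proof (Rmin_r d1 d2).
      destruct (Rle_dec u' m).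
      * apply Hd1'; [split; [assumption|lra] | lra | lra].
      * apply Hd2'; [split; [assumption|lra] | lra | lra].
    + destruct (C1 r u (conj Hr (conj (proj1 Hu) Hum)) U HU HUx)
        as [d1 [Hd1 Hd1']].
      exists (Rmin d1 (m - u)); split; [apply Rmin_pos; lra|].
      intros r' u' [Hr' Hu'] Hrr Huu.
      pose proof (Rmin_l d1 (m - u)); pose proof (Rmin_r d1 (m - u)).
      assert (Huu' : Rabs (u' - u) < m - u) by lra.
      apply Rabs_def2 in Huu'.
      destruct (Rle_dec u' m); [|lra].
      apply Hd1'; [split; [assumption|lra] | lra | lra].
  - apply Rnot_le_lt in Hum.
    destruct (C2 r u (conj Hr (conj (Rlt_le _ _ Hum) (proj2 Hu))) U HU HUx)
      as [d1 [Hd1 Hd1']].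
    exists (Rmin d1 (u - m)); split; [apply Rmin_pos; lra|].
    intros r' u' [Hr' Hu'] Hrr Huu.
    pose proof (Rmin_l d1 (u - m)); pose proof (Rmin_r d1 (u - m)).
    assert (Huu' : Rabs (u' - u) < u - m) by lra.
    apply Rabs_def2 in Huu'.
    destruct (Rle_dec u' m); [lra|].
    apply Hd1'; [split; [assumption|lra] | lra | lra].
Qed.

Lemma cont_on2_of_cont_on {X : TopSpace} (D : R -> Prop) (f : R -> X) :
  cont_on D f -> cont_on2 (fun r u => interval 0 1 r /\ D u) (fun _ u => f u).
Proof.
  intros C r u [_ Du] U HU HUx.
  destruct (C u Du U HU HUx) as [d [Hd Hd']].
  exists d; split; [assumption|].
  intros r' u' [_ Du'] _ Hu; apply Hd'; assumption.
Qed.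

Lemma cont_on_of_cont_on2 {X : TopSpace} (D : R -> Prop) (f : R -> X) :
  cont_on2 (fun r u => interval 0 1 r /\ D u) (fun _ u => f u) -> cont_on D f.
Proof.
  intros C u Du U HU HUx.
  assert (H0 : interval 0 1 0) by (unfold interval; lra).
  destruct (C 0 u (conj H0 Du) U HU HUx) as [d [Hd Hd']].
  exists d; split; [assumption|].
  intros y Dy Hy; apply (Hd' 0 y); [split; assumption | | assumption].
  rewrite Rminus_0_r, Rabs_R0; lra.
Qed.

Lemma path_homotopic_point {X : TopSpace} (a b : R -> X) (s : R) :
  a s = b s -> path_homotopic s s a b.
Proof.
  intros E; exists (fun _ _ => a s); unfold interval.
  split; [|split; [|split]].
  - intros r u _ U _ HU; exists 1; split; [lra | intros; assumption].
  - intros u Hu; replace u with s by lra; reflexivity.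
  - intros u Hu; replace u with s by lra; exact E.
  - intros; split; reflexivity.
Qed.

Lemma path_homotopic_concat {X : TopSpace} (a b : R -> X) (s m t : R) :
  s <= m <= t ->
  path_homotopic s m a b -> path_homotopic m t a b -> path_homotopic s t a b.
Proof.
  intros Hm [H1 [C1 [A1 [B1 E1]]]] [H2 [C2 [A2 [B2 E2]]]].
  exists (fun r u => if Rle_dec u m then H1 r u else H2 r u); unfold interval in *.
  split; [|split; [|split]].
  - apply cont_on2_paste; [assumption | assumption | assumption |].
    intros r Hr; destruct (E1 r Hr) as [_ ->]; destruct (E2 r Hr) as [-> _].
    reflexivity.
  - intros u Hu; destruct (Rle_dec u m); [apply A1 | apply A2]; lra.
  - intros u Hu; destruct (Rle_dec u m); [apply B1 | apply B2]; lra.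
  - intros r Hr; split.
    + destruct (Rle_dec s m); [apply (E1 r Hr) | lra].
    + destruct (Rle_dec t m).
      * replace t with m by lra; apply (E1 r Hr).
      * apply (E2 r Hr).
Qed.

Lemma interval_segment (p q v : R) :
  interval 0 1 p -> interval 0 1 q -> 0 <= v <= 1 -> interval 0 1 (p + v * (q - p)).
Proof. unfold interval; intros; nra. Qed.

Lemma segment_dist (p q v : R) :
  0 <= v <= 1 -> Rabs (p + v * (q - p) - p) <= Rabs (q - p).
Proof.
  intros Hv; replace (p + v * (q - p) - p) with (v * (q - p)) by ring.
  rewrite Rabs_mult, (Rabs_pos_eq v) by lra.
  pose proof (Rabs_pos (q - p)); nra.
Qed.

Lemma Rabs_scale_diff (k u u' : R) : Rabs (k * u' - k * u) = Rabs k * Rabs (u' - u).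
Proof. rewrite <- Rabs_mult; f_equal; ring. Qed.

Lemma is_path_segment {X : TopSpace} (a : R -> X) (p q : R) :
  is_path 0 1 a -> interval 0 1 p -> interval 0 1 q ->
  is_path 0 1 (fun v => a (p + v * (q - p))).
Proof.
  intros Ha Hp Hq; apply cont_on_of_cont_on2.
  apply (cont_on2_comp_snd _ (fun r u => interval 0 1 r /\ interval 0 1 u)
           (fun _ u => a u) _ (Rabs (q - p))).
  - apply Rabs_pos.
  - apply cont_on2_of_cont_on; exact Ha.
  - intros r u [Hr Hu]; split; [exact Hr | apply interval_segment; assumption].
  - intros u u'; replace (p + u' * (q - p) - (p + u * (q - p)))
      with ((q - p) * u' - (q - p) * u) by ring.
    rewrite Rabs_scale_diff; lra.
Qed.

Definition concat_rev {X : TopSpace} (f g : R -> X) (w : R) : X :=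
  if Rle_dec w (1/2) then f (2 * w) else g (2 - 2 * w).

Lemma concat_rev_0 {X : TopSpace} (f g : R -> X) : concat_rev f g 0 = f 0.
Proof. unfold concat_rev; destruct Rle_dec; [f_equal; ring | lra]. Qed.

Lemma concat_rev_half {X : TopSpace} (f g : R -> X) : concat_rev f g (1/2) = f 1.
Proof. unfold concat_rev; destruct Rle_dec; [f_equal; field | lra]. Qed.

Lemma concat_rev_1 {X : TopSpace} (f g : R -> X) : concat_rev f g 1 = g 0.
Proof. unfold concat_rev; destruct Rle_dec; [lra | f_equal; ring]. Qed.

Lemma is_path_concat_rev {X : TopSpace} (f g : R -> X) :
  is_path 0 1 f -> is_path 0 1 g -> f 1 = g 1 -> is_path 0 1 (concat_rev f g).
Proof.
  intros Hf Hg E; apply cont_on_of_cont_on2; unfold concat_rev.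
  apply (cont_on2_paste 0 (1/2) 1 (fun _ w => f (2 * w)) (fun _ w => g (2 - 2 * w))).
  - lra.
  - apply (cont_on2_comp_snd _ (fun r u => interval 0 1 r /\ interval 0 1 u)
             (fun _ u => f u) _ 2); [lra | apply cont_on2_of_cont_on; exact Hf | |].
    + intros r u [Hr Hu]; unfold interval in *; split; [exact Hr | lra].
    + intros u u'; rewrite Rabs_scale_diff, (Rabs_pos_eq 2) by lra; lra.
  - apply (cont_on2_comp_snd _ (fun r u => interval 0 1 r /\ interval 0 1 u)
             (fun _ u => g u) _ 2); [lra | apply cont_on2_of_cont_on; exact Hg | |].
    + intros r u [Hr Hu]; unfold interval in *; split; [exact Hr | lra].
    + intros u u'; replace (2 - 2 * u' - (2 - 2 * u)) with (-2 * u' - -2 * u) by ring.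
      rewrite Rabs_scale_diff, Rabs_left by lra; lra.
  - intros r _; replace (2 * (1/2)) with 1 by field.
    replace (2 - 1) with 1 by ring; exact E.
Qed.

(* [r |-> (rim_s r, rim_x r)] runs at constant speed along the three sides
   [x = 0], [s = 1], [x = 1] of the unit square, from [(0,0)] to [(0,1)];
   [cone] then moves every such point linearly to the midpoint [(0, 1/2)]
   of the fourth side. *)
Definition rim_s (r : R) : R := Rmin 1 (Rmin (3 * r) (3 - 3 * r)).
Definition rim_x (r : R) : R := Rmin 1 (Rmax 0 (3 * r - 1)).
Definition cone_s (r u : R) : R := (1 - u) * rim_s r.
Definition cone_x (r u : R) : R := (1 - u) * rim_x r + u / 2.

Lemma rim_s_bounds (r : R) : 0 <= r <= 1 -> 0 <= rim_s r <= 1.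
Proof. intros; unfold rim_s, Rmin; repeat destruct Rle_dec; lra. Qed.

Lemma rim_x_bounds (r : R) : 0 <= r <= 1 -> 0 <= rim_x r <= 1.
Proof. intros; unfold rim_x, Rmin, Rmax; repeat destruct Rle_dec; lra. Qed.

Lemma rim_s_lipschitz (r r' : R) : Rabs (rim_s r' - rim_s r) <= 3 * Rabs (r' - r).
Proof.
  unfold rim_s, Rmin, Rabs; repeat destruct Rle_dec; repeat destruct Rcase_abs; lra.
Qed.

Lemma rim_x_lipschitz (r r' : R) : Rabs (rim_x r' - rim_x r) <= 3 * Rabs (r' - r).
Proof.
  unfold rim_x, Rmin, Rmax, Rabs; repeat destruct Rle_dec; repeat destruct Rcase_abs;
    lra.
Qed.

Lemma rim_start : rim_s 0 = 0 /\ rim_x 0 = 0.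
Proof. unfold rim_s, rim_x, Rmin, Rmax; split; repeat destruct Rle_dec; lra. Qed.

Lemma rim_end : rim_s 1 = 0 /\ rim_x 1 = 1.
Proof. unfold rim_s, rim_x, Rmin, Rmax; split; repeat destruct Rle_dec; lra. Qed.

Lemma rim_on_sides (r : R) : 0 <= r <= 1 -> rim_s r = 1 \/ rim_x r = 0 \/ rim_x r = 1.
Proof. intros; unfold rim_s, rim_x, Rmin, Rmax; repeat destruct Rle_dec; lra. Qed.

Lemma Rabs_mul_diff_le (x x' y y' : R) : 0 <= x' <= 1 -> 0 <= y <= 1 ->
  Rabs (x' * y' - x * y) <= Rabs (y' - y) + Rabs (x' - x).
Proof.
  intros Hx Hy; replace (x' * y' - x * y) with (x' * (y' - y) + y * (x' - x)) by ring.
  eapply Rle_trans; [apply Rabs_triang|].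
  rewrite !Rabs_mult, (Rabs_pos_eq x'), (Rabs_pos_eq y) by lra.
  pose proof (Rabs_pos (y' - y)); pose proof (Rabs_pos (x' - x)); nra.
Qed.

Section Cone.
Let unit_square (r u : R) : Prop := interval 0 1 r /\ interval 0 1 u.

Lemma cone_in_square (r u : R) :
  unit_square r u -> unit_square (cone_s r u) (cone_x r u).
Proof.
  intros [Hr Hu]; unfold unit_square, cone_s, cone_x, interval in *.
  pose proof (rim_s_bounds r Hr); pose proof (rim_x_bounds r Hr); split; nra.
Qed.

Lemma cone_s_lipschitz (r u r' u' : R) : unit_square r u -> unit_square r' u' ->
  Rabs (cone_s r' u' - cone_s r u) <= 3 * (Rabs (r' - r) + Rabs (u' - u)).
Proof.
  intros [Hr Hu] [Hr' Hu']; unfold unit_square, cone_s, interval in *.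
  pose proof (rim_s_bounds r Hr); pose proof (rim_s_lipschitz r r').
  eapply Rle_trans; [apply Rabs_mul_diff_le; lra|].
  replace (1 - u' - (1 - u)) with (- (u' - u)) by ring; rewrite Rabs_Ropp.
  pose proof (Rabs_pos (r' - r)); pose proof (Rabs_pos (u' - u)); lra.
Qed.

Lemma cone_x_lipschitz (r u r' u' : R) : unit_square r u -> unit_square r' u' ->
  Rabs (cone_x r' u' - cone_x r u) <= 3 * (Rabs (r' - r) + Rabs (u' - u)).
Proof.
  intros [Hr Hu] [Hr' Hu']; unfold unit_square, cone_x, interval in *.
  pose proof (rim_x_bounds r Hr); pose proof (rim_x_lipschitz r r').
  replace ((1 - u') * rim_x r' + u' / 2 - ((1 - u) * rim_x r + u / 2))
    with (((1 - u') * rim_x r' - (1 - u) * rim_x r) + (/ 2 * u' - / 2 * u)) by field.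
  eapply Rle_trans; [apply Rabs_triang|].
  rewrite Rabs_scale_diff, (Rabs_pos_eq (/ 2)) by lra.
  pose proof (Rabs_mul_diff_le (1 - u) (1 - u') (rim_x r) (rim_x r') ltac:(lra) ltac:(lra)).
  replace (1 - u' - (1 - u)) with (- (u' - u)) in * by ring; rewrite Rabs_Ropp in *.
  pose proof (Rabs_pos (r' - r)); pose proof (Rabs_pos (u' - u)); lra.
Qed.

End Cone.

Lemma path_homotopic_of_trivial_concat_rev {X : TopSpace} (f g : R -> X) :
  f 0 = g 0 -> f 1 = g 1 -> trivial_loop (f 0) (concat_rev f g) ->
  path_homotopic 0 1 f g.
Proof.
  intros E0 E1 [H [HC [H0 [H1 Hend]]]].
  rewrite concat_rev_0, concat_rev_1, <- E0 in Hend.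
  destruct rim_start as [Hs0 Hx0]; destruct rim_end as [Hs1 Hx1].
  exists (fun r u => H (cone_s r u) (cone_x r u)).
  split; [|split; [|split]]; [|unfold cone_s, cone_x ..].
  - apply (cont_on2_comp_lipschitz _ _ H cone_s cone_x 3 ltac:(lra) HC);
      [exact cone_in_square | exact cone_s_lipschitz
      | exact cone_x_lipschitz].
  - intros u Hu; unfold interval in Hu; rewrite Hs0, Hx0, Rmult_0_r, Rplus_0_l.
    rewrite H0 by (unfold interval; lra).
    unfold concat_rev; destruct Rle_dec; [f_equal; field | lra].
  - intros u Hu; unfold interval in Hu; rewrite Hs1, Hx1, Rmult_0_r.
    rewrite H0 by (unfold interval; lra).
    unfold concat_rev; destruct Rle_dec.
    + replace u with 1 by lra; rewrite <- E1; f_equal; field.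
    + f_equal; field.
  - intros r Hr; unfold interval in Hr.
    pose proof (rim_s_bounds r Hr) as Hsb.
    rewrite Rminus_0_r, !Rmult_1_l, Rminus_diag, !Rmult_0_l.
    split.
    + replace (rim_x r + 0 / 2) with (rim_x r) by field.
      destruct (rim_on_sides r Hr) as [E|[E|E]]; rewrite E.
      * apply H1; unfold interval; apply rim_x_bounds; exact Hr.
      * apply Hend; unfold interval; lra.
      * apply Hend; unfold interval; lra.
    + replace (0 + 1 / 2) with (1 / 2) by ring.
      rewrite H0 by (unfold interval; lra); apply concat_rev_half.
Qed.

Lemma segment_coordinate_bounds (p q u : R) : p <> q ->
  interval (Rmin p q) (Rmax p q) u -> 0 <= (u - p) / (q - p) <= 1.
Proof.
  unfold interval, Rmin, Rmax, Rdiv; intros Hpq Hu.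
  assert (Hk : (q - p) * / (q - p) = 1) by (field; lra).
  destruct (Rle_dec p q).
  - assert (0 < / (q - p)) by (apply Rinv_0_lt_compat; lra); nra.
  - assert (/ (q - p) < 0) by (apply Rinv_lt_0_compat; lra); nra.
Qed.

Lemma path_homotopic_segment {X : TopSpace} (a b : R -> X) (p q : R) : p <> q ->
  path_homotopic 0 1 (fun v => a (p + v * (q - p))) (fun v => b (p + v * (q - p))) ->
  path_homotopic (Rmin p q) (Rmax p q) a b.
Proof.
  intros Hpq [H [HC [H0 [H1 Hend]]]].
  assert (Hcoord : forall u, p + (u - p) / (q - p) * (q - p) = u)
    by (intro u; field; lra).
  exists (fun r u => H r ((u - p) / (q - p))).
  split; [|split; [|split]].
  - apply (cont_on2_comp_snd _ _ H _ (/ Rabs (q - p)) ltac:(left; apply Rinv_0_lt_compat,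
      Rabs_pos_lt; lra) HC).
    + intros r u [Hr Hu]; split; [exact Hr | apply segment_coordinate_bounds; assumption].
    + intros u u'; rewrite <- Rabs_inv, <- Rabs_scale_diff.
      right; f_equal; field; lra.
  - intros u Hu; rewrite H0, Hcoord; [reflexivity|].
    unfold interval; apply segment_coordinate_bounds; assumption.
  - intros u Hu; rewrite H1, Hcoord; [reflexivity|].
    unfold interval; apply segment_coordinate_bounds; assumption.
  - intros r Hr; destruct (Hend r Hr) as [Hp Hq].
    replace ((p - p) / (q - p)) with 0 in * by (field; lra).
    unfold Rmin, Rmax; destruct (Rle_dec p q);
      replace ((p - p) / (q - p)) with 0 by (field; lra);
      replace ((q - p) / (q - p)) with 1 by (field; lra);
      rewrite Hp, Hq; split; f_equal; ring.
Qed.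

Definition segment_loop {X : TopSpace} (a b : R -> X) (p q : R) : R -> X :=
  concat_rev (fun v => a (p + v * (q - p))) (fun v => b (p + v * (q - p))).

Lemma segment_loop_is_loop {X : TopSpace} (a b : R -> X) (p q : R) :
  is_path 0 1 a -> is_path 0 1 b -> interval 0 1 p -> interval 0 1 q ->
  a p = b p -> a q = b q -> is_loop (a p) (segment_loop a b p q).
Proof.
  intros Ha Hb Hp Hq Ep Eq; unfold segment_loop; split; [|split].
  - apply is_path_concat_rev; try apply is_path_segment; try assumption.
    replace (p + 1 * (q - p)) with q by ring; exact Eq.
  - rewrite concat_rev_0; f_equal; ring.
  - rewrite concat_rev_1, Ep; f_equal; ring.
Qed.

Lemma path_homotopic_of_trivial_segment_loop {X : TopSpace} (a b : R -> X) (p q : R) :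
  p <> q -> a p = b p -> a q = b q -> trivial_loop (a p) (segment_loop a b p q) ->
  path_homotopic (Rmin p q) (Rmax p q) a b.
Proof.
  intros Hpq Ep Eq Htriv; apply path_homotopic_segment; [exact Hpq|].
  apply path_homotopic_of_trivial_concat_rev.
  - replace (p + 0 * (q - p)) with p by ring; exact Ep.
  - replace (p + 1 * (q - p)) with q by ring; exact Eq.
  - replace (p + 0 * (q - p)) with p by ring; exact Htriv.
Qed.

Lemma segment_loop_near {X : TopSpace} (a b : R -> X) (t : R) (U : X -> Prop) :
  is_path 0 1 a -> is_path 0 1 b -> interval 0 1 t -> a t = b t ->
  isOpen X U -> U (a t) ->
  exists d, 0 < d /\ forall q, interval 0 1 q -> Rabs (q - t) < d ->
    forall w, interval 0 1 w -> U (segment_loop a b t q w).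
Proof.
  intros Ha Hb Ht Et HU HUa.
  destruct (Ha t Ht U HU HUa) as [da [Hda Hda']].
  rewrite Et in HUa; destruct (Hb t Ht U HU HUa) as [db [Hdb Hdb']].
  exists (Rmin da db); split; [apply Rmin_pos; assumption|].
  intros q Hq Hqt w Hw; unfold interval in Hw.
  pose proof (Rmin_l da db); pose proof (Rmin_r da db).
  unfold segment_loop, concat_rev; destruct Rle_dec.
  - pose proof (segment_dist t q (2 * w) ltac:(lra)).
    apply Hda'; [apply interval_segment; try assumption; lra | lra].
  - pose proof (segment_dist t q (2 - 2 * w) ltac:(lra)).
    apply Hdb'; [apply interval_segment; try assumption; lra | lra].
Qed.

Lemma homotopic_near_non_aw {X : TopSpace} (a b : R -> X) (A : R -> Prop) (t : R) :
  is_path 0 1 a -> is_path 0 1 b ->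
  (forall u, A u -> interval 0 1 u) -> (forall u, A u -> a u = b u) ->
  A t -> ~ aw X (a t) ->
  exists e, 0 < e /\ forall q, A q -> Rabs (q - t) < e -> q <> t ->
    path_homotopic (Rmin t q) (Rmax t q) a b.
Proof.
  intros Ha Hb HA Eab At Hnaw; apply NNPP; intro Hno.
  assert (Hbad : forall n : nat, exists q, A q /\ Rabs (q - t) < / (INR n + 1) /\
            q <> t /\ ~ path_homotopic (Rmin t q) (Rmax t q) a b).
  { intro n; apply NNPP; intro Hn; apply Hno; exists (/ (INR n + 1)); split.
    - apply Rinv_0_lt_compat; pose proof (pos_INR n); lra.
    - intros q Aq Hqt Hne; apply NNPP; intro; apply Hn; exists q; auto. }
  destruct (choice _ Hbad) as [qs Hqs].
  apply Hnaw; exists (fun n => segment_loop a b t (qs n)); split; [split|].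
  - intro n; destruct (Hqs n) as [Aq _].
    apply segment_loop_is_loop; auto.
  - intros U HU HUa.
    destruct (segment_loop_near a b t U Ha Hb (HA t At) (Eab t At) HU HUa)
      as [d [Hd Hnear]].
    destruct (archimed_cor1 d Hd) as [N [HN HN0]].
    exists N; intros n Hn; destruct (Hqs n) as [Aq [Hqt _]].
    apply Hnear; [apply HA; exact Aq|].
    assert (/ (INR n + 1) <= / INR N); [|lra].
    apply Rinv_le_contravar; [apply lt_0_INR; assumption|].
    apply le_INR in Hn; lra.
  - intros n Htriv; destruct (Hqs n) as [Aq [_ [Hne Hnot]]]; apply Hnot.
    apply path_homotopic_of_trivial_segment_loop; auto.
Qed.

Lemma closedR_adherent (A : R -> Prop) (m : R) : closedR A ->
  (forall d, 0 < d -> exists x, A x /\ Rabs (x - m) < d) -> A m.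
Proof.
  intros Hcl Hadh; apply NNPP; intro Hm.
  destruct (Hcl m Hm) as [d [Hd Hfar]].
  destruct (Hadh d Hd) as [x [Ax Hx]]; exact (Hfar x Hx Ax).
Qed.

Lemma is_lub_adherent (E : R -> Prop) (m d : R) : is_lub E m -> 0 < d ->
  exists x, E x /\ Rabs (x - m) < d.
Proof.
  intros [Hub Hlub] Hd; apply NNPP; intro Hno.
  assert (m <= m - d); [|lra].
  apply Hlub; intros x Ex; pose proof (Hub x Ex).
  destruct (Rle_dec x (m - d)) as [|Hx]; [assumption|].
  exfalso; apply Hno; exists x; split; [exact Ex|].
  rewrite Rabs_left1; lra.
Qed.

Lemma closedR_gap_after (A : R -> Prop) (m e c : R) : closedR A -> 0 < e ->
  A c -> m < c -> (forall q, A q -> m < q -> m + e <= q) ->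
  exists d, m < d <= c /\ A d /\ forall u, m < u < d -> ~ A u.
Proof.
  intros Hcl He Ac Hmc Hfar.
  set (lower := fun y => forall q, A q -> m < q -> y <= q).
  assert (Hlower : lower (m + e)) by exact Hfar.
  destruct (completeness lower) as [d [Hub Hlub]].
  { exists c; intros y Hy; exact (Hy c Ac Hmc). }
  { exists (m + e); exact Hlower. }
  assert (Hd : forall q, A q -> m < q -> d <= q).
  { intros q Aq Hq; apply Hlub; intros y Hy; exact (Hy q Aq Hq). }
  pose proof (Hub _ Hlower).
  exists d; split; [split; [lra | apply Hd; assumption]|split].
  - apply closedR_adherent; [exact Hcl|]; intros del Hdel; apply NNPP; intro Hno.
    assert (d + del <= d); [|lra].
    apply Hub; intros q Aq Hq; pose proof (Hd q Aq Hq).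
    destruct (Rle_dec (d + del) q) as [|Hlt]; [assumption|].
    exfalso; apply Hno; exists q; split; [exact Aq | rewrite Rabs_pos_eq; lra].
  - intros u Hu Au; pose proof (Hd u Au ltac:(lra)); lra.
Qed.

Section ClosedChain.

Variables (A : R -> Prop) (P : R -> R -> Prop).
Hypotheses (A_unit : forall u, A u -> interval 0 1 u) (A_closed : closedR A)
  (A_0 : A 0) (A_1 : A 1).
Hypotheses (P_0 : P 0 0)
  (P_trans : forall s m t, s <= m <= t -> P s m -> P m t -> P s t)
  (P_local : forall t, A t -> exists e, 0 < e /\
     forall q, A q -> Rabs (q - t) < e -> q <> t -> P (Rmin t q) (Rmax t q))
  (P_gap : forall c d, gap 0 1 A c d -> P c d).

Let reached (t : R) : Prop := A t /\ P 0 t.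

Lemma reached_lub_mem (m : R) : is_lub reached m -> A m.
Proof.
  intros Hm; apply closedR_adherent; [exact A_closed|].
  intros d Hd; destruct (is_lub_adherent reached m d Hm Hd) as [x [[Ax _] Hx]].
  exists x; split; assumption.
Qed.

Lemma reached_lub_reached (m : R) : is_lub reached m -> reached m.
Proof.
  intros Hm; pose proof (reached_lub_mem m Hm) as Am.
  destruct (P_local m Am) as [e [He Hloc]].
  destruct (is_lub_adherent reached m e Hm He) as [s [[As Ps] Hs]].
  pose proof (proj1 Hm s (conj As Ps)) as Hsm.
  split; [exact Am|].
  destruct (Req_dec s m) as [<-|Hne]; [exact Ps|].
  specialize (Hloc s As Hs Hne); rewrite Rmin_right, Rmax_left in Hloc by lra.
  apply (P_trans 0 s m); [|exact Ps | exact Hloc].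
  split; [apply (A_unit s As) | exact Hsm].
Qed.

Lemma reached_lub_eq1 (m : R) : is_lub reached m -> m = 1.
Proof.
  intros Hm; destruct (reached_lub_reached m Hm) as [Am Pm].
  pose proof (A_unit m Am) as Hm01; unfold interval in Hm01.
  destruct (Req_dec m 1) as [|Hne]; [assumption|]; exfalso.
  destruct (P_local m Am) as [e [He Hloc]].
  assert (Hbeyond : forall t, A t -> P 0 t -> t <= m)
    by (intros t At Pt; exact (proj1 Hm t (conj At Pt))).
  destruct (classic (exists q, A q /\ m < q < m + e)) as [[q [Aq Hq]]|Hno].
  - specialize (Hloc q Aq ltac:(rewrite Rabs_pos_eq; lra) ltac:(lra)).
    rewrite Rmin_left, Rmax_right in Hloc by lra.
    pose proof (Hbeyond q Aq (P_trans 0 m q ltac:(lra) Pm Hloc)); lra.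
  - destruct (closedR_gap_after A m e 1 A_closed He A_1 ltac:(lra)) as
      [d [Hd [Ad Hempty]]].
    { intros q Aq Hq; destruct (Rle_dec (m + e) q) as [|Hlt]; [assumption|].
      exfalso; apply Hno; exists q; split; [assumption | lra]. }
    assert (Hgap : gap 0 1 A m d) by (repeat split; auto; lra).
    pose proof (Hbeyond d Ad (P_trans 0 m d ltac:(lra) Pm (P_gap m d Hgap))); lra.
Qed.

Lemma closed_chain : P 0 1.
Proof.
  destruct (completeness reached) as [m Hm].
  - exists 1; intros t [At _]; apply (A_unit t At).
  - exists 0; split; assumption.
  - rewrite <- (reached_lub_eq1 m Hm); exact (proj2 (reached_lub_reached m Hm)).
Qed.

End ClosedChain.

Theorem mainTheorem11 (X : TopSpace) (a b : R -> X) (A : R -> Prop) :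
  is_path 0 1 a -> is_path 0 1 b ->
  homotopy_cut_set 0 1 a b A ->
  (forall u, A u -> ~ aw X (a u)) ->
  path_homotopic 0 1 a b.
Proof.
  intros Ha Hb [HA [Hcl [_ [A0 [A1 [Eab Hgap]]]]]] Hnaw.
  apply (closed_chain A (fun s t => path_homotopic s t a b)); try assumption.
  - apply path_homotopic_point; apply Eab; exact A0.
  - intros s m t Hm; apply path_homotopic_concat; exact Hm.
  - intros t At; apply homotopic_near_non_aw; auto.
Qed.
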